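(* For every bunch $\Delta$ and formula $\varphi$: if $[\![\lfloor\Delta\rfloor]\!]\subseteq[\![\varphi]\!]$ holds in the BI algebra $\mathcal C$ (with atoms interpreted by $[\![a]\!]=[\![a]\!]^{\mathrm{out}}$), then $\Delta\vdash_{\mathsf{cf}}\varphi$.
   Context: Formulas of BI: $\varphi,\psi ::= \top \mid \bot \mid \varphi\wedge\psi \mid \varphi\vee\psi \mid \varphi\to\psi \mid \mathsf{emp} \mid \varphi\ast\psi \mid \varphi -\!\!\ast\, \psi \mid a$, $a\in\mathrm{Atom}$. Bunches are finite binary trees whose leaves are formulas or empty bunches $\varnothing_m,\varnothing_a$ and whose internal nodes are labelled by the multiplicative comma ($\Delta_1\mathbin{,}\Delta_2$) or the additive semicolon ($\Delta_1\mathbin{;}\Delta_2$). A bunched context $\Delta(-)$ is a bunch with one leaf replaced by a hole; $\Delta(\Gamma)$ fills it with $\Gamma$. $\lfloor\Delta\rfloor$ is the formula obtained from $\Delta$ by replacing $\mathbin{,}$ by $\ast$, $\varnothing_m$ by $\mathsf{emp}$, $\mathbin{;}$ by $\wedge$, $\varnothing_a$ by $\top$. Bunch equivalence $\equiv$ is the least equivalence relation making $\mathbin{,}$ commutative, associative with unit $\varnothing_m$, $\mathbin{;}$ commutative, associative with unit $\varnothing_a$, and closed under contexts; $\mathrm{Bunch}$ is the set of bunches modulo $\equiv$. The cut-free BI sequent calculus ($\Delta\vdash_{\mathsf{cf}}\varphi$) has the rules: (ax) $a\vdash a$ for atoms $a$; (equiv) from $\Delta'\vdash\varphi$, $\Delta\equiv\Delta'$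 infer $\Delta\vdash\varphi$; (W;) from $\Delta(\Delta_1)\vdash\varphi$ infer $\Delta(\Delta_1\mathbin{;}\Delta_2)\vdash\varphi$; (C;) from $\Delta(\Delta_1\mathbin{;}\Delta_1)\vdash\varphi$ infer $\Delta(\Delta_1)\vdash\varphi$; (empR) $\varnothing_m\vdash\mathsf{emp}$; (empL) from $\Delta(\varnothing_m)\vdash\varphi$ infer $\Delta(\mathsf{emp})\vdash\varphi$; ($\ast$R) from $\Delta_1\vdash\varphi$, $\Delta_2\vdash\psi$ infer $\Delta_1\mathbin{,}\Delta_2\vdash\varphi\ast\psi$; ($\ast$L) from $\Delta(\varphi\mathbin{,}\psi)\vdash\chi$ infer $\Delta(\varphi\ast\psi)\vdash\chi$; ($-\!\ast$R) from $\Delta\mathbin{,}\varphi\vdash\psi$ infer $\Delta\vdash\varphi-\!\!\ast\,\psi$; ($-\!\ast$L) from $\Delta_1\vdash\varphi$, $\Delta(\Delta_2\mathbin{,}\psi)\vdash\chi$ infer $\Delta((\Delta_1\mathbin{,}\Delta_2)\mathbin{,}(\varphi-\!\!\ast\,\psi))\vdash\chi$; ($\top$R) $\varnothing_a\vdash\top$; ($\top$L) from $\Delta(\varnothing_a)\vdash\varphi$ infer $\Delta(\top)\vdash\varphi$; ($\wedge$R) from $\Delta_1\vdash\varphi$, $\Delta_2\vdash\psi$ infer $\Delta_1\mathbin{;}\Delta_2\vdash\varphi\wedge\psi$; ($\wedge$L) from $\Delta(\varphi\mathbin{;}\psi)\vdash\chi$ infer $\Delta(\varphi\wedge\psi)\vdash\chi$;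 ($\to$R) from $\Delta\mathbin{;}\varphi\vdash\psi$ infer $\Delta\vdash\varphi\to\psi$; ($\to$L) from $\Delta_1\vdash\varphi$, $\Delta(\Delta_2\mathbin{;}\psi)\vdash\chi$ infer $\Delta((\Delta_1\mathbin{;}\Delta_2)\mathbin{;}(\varphi\to\psi))\vdash\chi$; ($\bot$L) $\Delta(\bot)\vdash\varphi$; ($\vee$R1/2) from $\Delta\vdash\varphi$ (resp. $\Delta\vdash\psi$) infer $\Delta\vdash\varphi\vee\psi$; ($\vee$L) from $\Delta(\varphi)\vdash\chi$, $\Delta(\psi)\vdash\chi$ infer $\Delta(\varphi\vee\psi)\vdash\chi$. (No cut rule.) For a formula $\varphi$, $[\![\varphi]\!]^{\mathrm{out}}=\{\Delta\in\mathrm{Bunch}\mid\Delta\vdash_{\mathsf{cf}}\varphi\}$. For $X\subseteq\mathrm{Bunch}$, $\mathrm{cl}(X)=\bigcap\{[\![\varphi]\!]^{\mathrm{out}}\mid X\subseteq[\![\varphi]\!]^{\mathrm{out}}\}$, and $\mathcal C=\{X\subseteq\mathrm{Bunch}\mid X=\mathrm{cl}(X)\}$. $\mathcal C$ is a BI algebra with operations: $\mathsf{emp}=\mathrm{cl}(\{\varnothing_m\})$, $\top=\mathrm{Bunch}$, $\bot=\mathrm{cl}(\emptyset)$, $X\vee Y=\mathrm{cl}(X\cup Y)$, $X\wedge Y=X\cap Y$, $X\ast Y=\mathrm{cl}(\{\Delta\mathbin{,}\Delta'\mid\Delta\in X,\Delta'\in Y\})$, $X-\!\!\ast\,Y=\{\Delta\mid\forall\Delta'\in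 X.\ (\Delta\mathbin{,}\Delta')\in Y\}$, $X\to Y=\{\Delta\mid\forall\Delta'\in X.\ (\Delta\mathbin{;}\Delta')\in Y\}$; the order is inclusion. Formulas are interpreted homomorphically in $\mathcal C$ given the interpretation of atoms. *)

Set Implicit Arguments.

Section BI.
Variable Atom : Type.

Inductive formula : Type :=
| FTop | FBot
| FAnd (p q : formula) | FOr (p q : formula) | FImp (p q : formula)
| FEmp | FStar (p q : formula) | FWand (p q : formula)
| FAtom (a : Atom).

(* Bunches (raw trees; Bunch = bunch modulo bequiv) *)
Inductive bunch : Type :=
| BForm (p : formula)
| BEmpM
| BEmpA
| BComma (D1 D2 : bunch)
| BSemi (D1 D2 : bunch).

Inductive bctx : Type :=
| CHole
| CCommaL (C : bctx) (D : bunch)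
| CCommaR (D : bunch) (C : bctx)
| CSemiL (C : bctx) (D : bunch)
| CSemiR (D : bunch) (C : bctx).

Fixpoint fill (C : bctx) (G : bunch) : bunch :=
  match C with
  | CHole => G
  | CCommaL C' D => BComma (fill C' G) D
  | CCommaR D C' => BComma D (fill C' G)
  | CSemiL C' D => BSemi (fill C' G) D
  | CSemiR D C' => BSemi D (fill C' G)
  end.

Fixpoint floor (D : bunch) : formula :=
  match D with
  | BForm p => p
  | BEmpM => FEmp
  | BEmpA => FTop
  | BComma D1 D2 => FStar (floor D1) (floor D2)
  | BSemi D1 D2 => FAnd (floor D1) (floor D2)
  end.

Inductive bequiv : bunch -> bunch -> Prop :=
| beq_refl D : bequiv D D
| beq_sym D D' : bequiv D D' -> bequiv D' D
| beq_trans D1 D2 D3 : bequiv D1 D2 -> bequiv D2 D3 -> bequiv D1 D3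
| beq_comma_comm D1 D2 : bequiv (BComma D1 D2) (BComma D2 D1)
| beq_comma_assoc D1 D2 D3 :
    bequiv (BComma D1 (BComma D2 D3)) (BComma (BComma D1 D2) D3)
| beq_comma_unit D : bequiv (BComma D BEmpM) D
| beq_semi_comm D1 D2 : bequiv (BSemi D1 D2) (BSemi D2 D1)
| beq_semi_assoc D1 D2 D3 :
    bequiv (BSemi D1 (BSemi D2 D3)) (BSemi (BSemi D1 D2) D3)
| beq_semi_unit D : bequiv (BSemi D BEmpA) D
| beq_ctx C G G' : bequiv G G' -> bequiv (fill C G) (fill C G').

Inductive cf : bunch -> formula -> Prop :=
| cf_ax a : cf (BForm (FAtom a)) (FAtom a)
| cf_equiv D D' p : cf D' p -> bequiv D D' -> cf D p
| cf_Wsemi C D1 D2 p : cf (fill C D1) p -> cf (fill C (BSemi D1 D2)) p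
| cf_Csemi C D1 p : cf (fill C (BSemi D1 D1)) p -> cf (fill C D1) p
| cf_empR : cf BEmpM FEmp
| cf_empL C p : cf (fill C BEmpM) p -> cf (fill C (BForm FEmp)) p
| cf_starR D1 D2 p q : cf D1 p -> cf D2 q -> cf (BComma D1 D2) (FStar p q)
| cf_starL C p q r :
    cf (fill C (BComma (BForm p) (BForm q))) r -> cf (fill C (BForm (FStar p q))) r
| cf_wandR D p q : cf (BComma D (BForm p)) q -> cf D (FWand p q)
| cf_wandL C D1 D2 p q r :
    cf D1 p -> cf (fill C (BComma D2 (BForm q))) r ->
    cf (fill C (BComma (BComma D1 D2) (BForm (FWand p q)))) r
| cf_topR : cf BEmpA FTop
| cf_topL C p : cf (fill C BEmpA) p -> cf (fill C (BForm FTop)) p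
| cf_andR D1 D2 p q : cf D1 p -> cf D2 q -> cf (BSemi D1 D2) (FAnd p q)
| cf_andL C p q r :
    cf (fill C (BSemi (BForm p) (BForm q))) r -> cf (fill C (BForm (FAnd p q))) r
| cf_impR D p q : cf (BSemi D (BForm p)) q -> cf D (FImp p q)
| cf_impL C D1 D2 p q r :
    cf D1 p -> cf (fill C (BSemi D2 (BForm q))) r ->
    cf (fill C (BSemi (BSemi D1 D2) (BForm (FImp p q)))) r
| cf_botL C p : cf (fill C (BForm FBot)) p
| cf_orR1 D p q : cf D p -> cf D (FOr p q)
| cf_orR2 D p q : cf D q -> cf D (FOr p q)
| cf_orL C p q r :
    cf (fill C (BForm p)) r -> cf (fill C (BForm q)) r -> cf (fill C (BForm (FOr p q))) r.

(* All sets actually used are closed under bequiv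
   (every [[phi]]^out is, by the (equiv) rule), so predicates on raw bunches
   faithfully represent subsets of Bunch = bunch / bequiv. *)
Definition bset := bunch -> Prop.

Definition out (p : formula) : bset := fun D => cf D p.

Definition cl (X : bset) : bset :=
  fun G => forall p : formula, (forall D, X D -> out p D) -> out p G.

Definition C_emp : bset := cl (fun G => G = BEmpM).
Definition C_top : bset := fun _ => True.
Definition C_bot : bset := cl (fun _ => False).
Definition C_or (X Y : bset) : bset := cl (fun G => X G \/ Y G).
Definition C_and (X Y : bset) : bset := fun G => X G /\ Y G.
Definition C_star (X Y : bset) : bset :=
  cl (fun G => exists D D', X D /\ Y D' /\ G = BComma D D').
Definition C_wand (X Y : bset) : bset :=
  fun D => forall D', X D' -> Y (BComma D D').
Definition C_imp (X Y : bset) : bset :=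
  fun D => forall D', X D' -> Y (BSemi D D').

Fixpoint sem (p : formula) : bset :=
  match p with
  | FTop => C_top
  | FBot => C_bot
  | FAnd p q => C_and (sem p) (sem q)
  | FOr p q => C_or (sem p) (sem q)
  | FImp p q => C_imp (sem p) (sem q)
  | FEmp => C_emp
  | FStar p q => C_star (sem p) (sem q)
  | FWand p q => C_wand (sem p) (sem q)
  | FAtom a => out (FAtom a)
  end.

End BI.


(* Okada's argument.  By simultaneous induction on [p], the one-leaf bunch
   [BForm p] lies in [sem p] and [sem p] is contained in [out p].  For the
   first half at [FImp] and [FWand] the sets [sem q] must be closed under
   bunch equivalence and the left rules (W;), (/\L), (->L) and (-*L): every
   [out r] is, hence every [cl X] (an intersection of such sets), and the
   property is preserved by [C_and], [C_imp] and [C_wand].  Consequently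
   [D] lies in [sem (floor D)], so the hypothesis puts [D] in [sem p], which
   is contained in [out p]. *)

Set Implicit Arguments.

Section Okada.
Variable A : Type.

Definition bsubset (X Y : bset A) : Prop := forall G, X G -> Y G.

Record left_closed (X : bset A) : Prop := {
  lc_equiv : forall G G', bequiv G' G -> X G -> X G';
  lc_Wsemi : forall C D1 D2, X (fill C D1) -> X (fill C (BSemi D1 D2));
  lc_andL : forall C p q,
    X (fill C (BSemi (BForm p) (BForm q))) -> X (fill C (BForm (FAnd p q)));
  lc_impL : forall C D1 D2 p q, cf D1 p -> X (fill C (BSemi D2 (BForm q))) ->
    X (fill C (BSemi (BSemi D1 D2) (BForm (FImp p q))));
  lc_wandL : forall C D1 D2 p q, cf D1 p -> X (fill C (BComma D2 (BForm q))) ->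
    X (fill C (BComma (BComma D1 D2) (BForm (FWand p q))))
}.

Lemma bequiv_semi_unitl (D : bunch A) : bequiv (BSemi (BEmpA A) D) D.
Proof. eapply beq_trans; [apply beq_semi_comm | apply beq_semi_unit]. Qed.

Lemma bequiv_comma_unitl (D : bunch A) : bequiv (BComma (BEmpM A) D) D.
Proof. eapply beq_trans; [apply beq_comma_comm | apply beq_comma_unit]. Qed.

Lemma cf_top (D : bunch A) : cf D (FTop A).
Proof.
  apply cf_equiv with (BSemi (BEmpA A) D).
  - apply (cf_Wsemi (CHole A)), cf_topR.
  - apply beq_sym, bequiv_semi_unitl.
Qed.

Lemma out_left_closed (r : formula A) : left_closed (out r).
Proof.
  split; unfold out; intros.
  - eapply cf_equiv; eassumption.
  - now apply cf_Wsemi.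
  - now apply cf_andL.
  - now apply cf_impL.
  - now apply cf_wandL.
Qed.

Lemma cl_left_closed (X : bset A) : left_closed (cl X).
Proof.
  split; intros; intros r Hr; destruct (out_left_closed r); eauto.
Qed.

Lemma C_and_left_closed (X Y : bset A) :
  left_closed X -> left_closed Y -> left_closed (C_and X Y).
Proof.
  intros [] []; split; unfold C_and; intros; intuition eauto.
Qed.

Lemma C_imp_left_closed (X Y : bset A) : left_closed Y -> left_closed (C_imp X Y).
Proof.
  intros HY; split; unfold C_imp.
  - intros G G' Heq H D' HD'.
    apply (lc_equiv HY) with (BSemi G D'); auto.
    apply (beq_ctx (CSemiL (CHole A) D')); assumption.
  - intros C D1 D2 H D' HD'; apply (lc_Wsemi HY (CSemiL C D')), H, HD'.
  - intros C p q H D' HD'; apply (lc_andL HY (CSemiL C D')), H, HD'.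
  - intros C D1 D2 p q Hp H D' HD'; apply (lc_impL HY (CSemiL C D')); [exact Hp | exact (H D' HD')].
  - intros C D1 D2 p q Hp H D' HD'; apply (lc_wandL HY (CSemiL C D')); [exact Hp | exact (H D' HD')].
Qed.

Lemma C_wand_left_closed (X Y : bset A) : left_closed Y -> left_closed (C_wand X Y).
Proof.
  intros HY; split; unfold C_wand.
  - intros G G' Heq H D' HD'.
    apply (lc_equiv HY) with (BComma G D'); auto.
    apply (beq_ctx (CCommaL (CHole A) D')); assumption.
  - intros C D1 D2 H D' HD'; apply (lc_Wsemi HY (CCommaL C D')), H, HD'.
  - intros C p q H D' HD'; apply (lc_andL HY (CCommaL C D')), H, HD'.
  - intros C D1 D2 p q Hp H D' HD'; apply (lc_impL HY (CCommaL C D')); [exact Hp | exact (H D' HD')].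
  - intros C D1 D2 p q Hp H D' HD'; apply (lc_wandL HY (CCommaL C D')); [exact Hp | exact (H D' HD')].
Qed.

Lemma sem_left_closed (p : formula A) : left_closed (sem p).
Proof.
  induction p; simpl.
  - split; unfold C_top; auto.
  - apply cl_left_closed.
  - now apply C_and_left_closed.
  - apply cl_left_closed.
  - now apply C_imp_left_closed.
  - apply cl_left_closed.
  - apply cl_left_closed.
  - now apply C_wand_left_closed.
  - apply out_left_closed.
Qed.

Lemma cl_incl (X : bset A) : bsubset X (cl X).
Proof. intros G HG p Hp; exact (Hp G HG). Qed.

Lemma cl_out (X : bset A) (p : formula A) :
  bsubset X (out p) -> bsubset (cl X) (out p).
Proof. intros Hp G HG; exact (HG p Hp). Qed.

Lemma C_bot_form : C_bot (BForm (FBot A)).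
Proof. intros r _; apply (cf_botL (CHole A)). Qed.

Lemma C_bot_out (p : formula A) : bsubset (@C_bot A) (out p).
Proof. apply cl_out; intros _ []. Qed.

Lemma C_emp_form : C_emp (BForm (FEmp A)).
Proof. intros r Hr; apply (cf_empL (CHole A)), Hr; reflexivity. Qed.

Lemma C_emp_out : bsubset (@C_emp A) (out (FEmp A)).
Proof. apply cl_out; intros G ->; apply cf_empR. Qed.

Lemma C_and_semi (X Y : bset A) (D1 D2 : bunch A) :
  left_closed X -> left_closed Y -> X D1 -> Y D2 -> C_and X Y (BSemi D1 D2).
Proof.
  intros HX HY H1 H2; split.
  - exact (lc_Wsemi HX (CHole A) D1 D2 H1).
  - apply (lc_equiv HY) with (BSemi D2 D1); [apply beq_semi_comm |].
    exact (lc_Wsemi HY (CHole A) D2 D1 H2).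
Qed.

Lemma C_and_out (X Y : bset A) (p q : formula A) :
  bsubset X (out p) -> bsubset Y (out q) -> bsubset (C_and X Y) (out (FAnd p q)).
Proof.
  intros Hp Hq G [HX HY].
  apply (cf_Csemi (CHole A)), cf_andR; [apply Hp | apply Hq]; assumption.
Qed.

Lemma C_or_form (X Y : bset A) (p q : formula A) :
  X (BForm p) -> Y (BForm q) -> C_or X Y (BForm (FOr p q)).
Proof. intros Hp Hq r Hr; apply (cf_orL (CHole A)); apply Hr; auto. Qed.

Lemma C_or_out (X Y : bset A) (p q : formula A) :
  bsubset X (out p) -> bsubset Y (out q) -> bsubset (C_or X Y) (out (FOr p q)).
Proof.
  intros Hp Hq; apply cl_out; intros G [HG | HG].
  - apply cf_orR1, Hp, HG.
  - apply cf_orR2, Hq, HG.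
Qed.

Lemma C_star_form (X Y : bset A) (p q : formula A) :
  X (BForm p) -> Y (BForm q) -> C_star X Y (BForm (FStar p q)).
Proof. intros Hp Hq r Hr; apply (cf_starL (CHole A)), Hr; eauto. Qed.

Lemma C_star_out (X Y : bset A) (p q : formula A) :
  bsubset X (out p) -> bsubset Y (out q) -> bsubset (C_star X Y) (out (FStar p q)).
Proof.
  intros Hp Hq; apply cl_out; intros G (D1 & D2 & H1 & H2 & ->).
  apply cf_starR; [apply Hp | apply Hq]; assumption.
Qed.

Lemma C_imp_form (X Y : bset A) (p q : formula A) :
  left_closed Y -> bsubset X (out p) -> Y (BForm q) -> C_imp X Y (BForm (FImp p q)).
Proof.
  intros HY Hp Hq D' HD'.
  apply (lc_equiv HY) with (BSemi (BSemi D' (BEmpA A)) (BForm (FImp p q))).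
  - eapply beq_trans; [apply beq_semi_comm |].
    apply (beq_ctx (CSemiL (CHole A) _)), beq_sym, beq_semi_unit.
  - apply (lc_impL HY (CHole A)); [now apply Hp |].
    apply (lc_equiv HY) with (BForm q); [apply bequiv_semi_unitl | exact Hq].
Qed.

Lemma C_imp_out (X Y : bset A) (p q : formula A) :
  X (BForm p) -> bsubset Y (out q) -> bsubset (C_imp X Y) (out (FImp p q)).
Proof. intros Hp Hq G HG; apply cf_impR, Hq, HG, Hp. Qed.

Lemma C_wand_form (X Y : bset A) (p q : formula A) :
  left_closed Y -> bsubset X (out p) -> Y (BForm q) -> C_wand X Y (BForm (FWand p q)).
Proof.
  intros HY Hp Hq D' HD'.
  apply (lc_equiv HY) with (BComma (BComma D' (BEmpM A)) (BForm (FWand p q))).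
  - eapply beq_trans; [apply beq_comma_comm |].
    apply (beq_ctx (CCommaL (CHole A) _)), beq_sym, beq_comma_unit.
  - apply (lc_wandL HY (CHole A)); [now apply Hp |].
    apply (lc_equiv HY) with (BForm q); [apply bequiv_comma_unitl | exact Hq].
Qed.

Lemma C_wand_out (X Y : bset A) (p q : formula A) :
  X (BForm p) -> bsubset Y (out q) -> bsubset (C_wand X Y) (out (FWand p q)).
Proof. intros Hp Hq G HG; apply cf_wandR, Hq, HG, Hp. Qed.

Lemma okada (p : formula A) : sem p (BForm p) /\ bsubset (sem p) (out p).
Proof.
  induction p as [| | p IHp q IHq | p IHp q IHq | p IHp q IHq
                  | | p IHp q IHq | p IHp q IHq | a]; simpl;
    try destruct IHp as [Fp Op]; try destruct IHq as [Fq Oq].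
  - split; [exact I | intros G _; apply cf_top].
  - split; [apply C_bot_form | apply C_bot_out].
  - split; [| now apply C_and_out].
    apply (lc_andL (sem_left_closed (FAnd p q)) (CHole A)).
    apply C_and_semi; auto using sem_left_closed.
  - split; [now apply C_or_form | now apply C_or_out].
  - split; [apply C_imp_form | apply C_imp_out]; auto using sem_left_closed.
  - split; [apply C_emp_form | apply C_emp_out].
  - split; [now apply C_star_form | now apply C_star_out].
  - split; [apply C_wand_form | apply C_wand_out]; auto using sem_left_closed.
  - split; [apply cf_ax | intros G HG; exact HG].
Qed.

Lemma sem_floor_self (D : bunch A) : sem (floor D) D.
Proof.
  induction D; simpl.
  - apply okada.
  - now apply cl_incl.
  - exact I.
  - apply cl_incl; eauto.
  - apply C_and_semi; auto using sem_left_closed.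
Qed.

End Okada.

Theorem theorem6p7 (Atom : Type) (D : bunch Atom) (p : formula Atom) :
  (forall G : bunch Atom, sem (floor D) G -> sem p G) -> cf D p.
Proof.
  intros Hsub.
  apply (proj2 (okada p)), Hsub, sem_floor_self.
Qed.
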